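(* Consider the online resource allocation model with samples described in the context, where $r_1,r_2$ are unknown to the decision-maker. Consider the algorithm that, with probability $1/2$, accepts only type 1 agents (each arriving type 1 agent is accepted while resource remains, all type 2 agents rejected), and with probability $1/2$ accepts only type 2 agents. For $p=O(1/\sqrt m)$ and any $m>0$, the competitive ratio of this algorithm is $1/2$.
   Context: Model: a decision-maker has $m$ units of a divisible resource to allocate to unit-demand agents of two types; an accepted type-$i$ agent ($i\in\{1,2\}$) yields a reward in $\{0,1\}$ with mean $r_i\in(0,1)$, $r_1>r_2$. An adversary chooses integers $h,\ell\ge0$. Each agent is independently sampled with probability $p$; $s_1\sim\mathrm{Bin}(h,p)$, $s_2\sim\mathrm{Bin}(\ell,p)$; $\psi$ is the sample information. The remaining $n_1=h-s_1$ type 1 and $n_2=\ell-s_2$ type 2 agents arrive online in an adversarial order $I$; on each arrival the decision-maker irrevocably accepts (possibly fractionally) or rejects, total allocation at most $m$. $\mathrm{OPT}(I)=r_1\min\{n_1,m\}+r_2\min\{n_2,(m-n_1)^+\}$. The competitive ratio of an algorithm $A$ is $\inf_{(h,\ell)}\mathbb E_\psi[\inf_I\mathbb E[\mathrm{REW}_A(I,\psi)]/\mathrm{OPT}(I)]$, $\mathrm{REW}_A$ being its cumulative expected reward and the inner expectation over its randomness. *)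

From HB Require Import structures.
From mathcomp Require Import all_boot all_order all_algebra.
From mathcomp Require Import all_classical all_reals.
Set Implicit Arguments. Unset Strict Implicit. Unset Printing Implicit Defensive.
Import Order.TTheory GRing.Theory Num.Theory.
Local Open Scope ring_scope.
Local Open Scope classical_set_scope.

Section Model.
Variable R : realType.

(* An arrival sequence: true = type 1 agent, false = type 2 agent. *)

Fixpoint rew_only (r1 r2 : R) (t : bool) (c : R) (I : seq bool) : R :=
  match I with
  | [::] => 0
  | a :: I' =>
      if a == t then
        let x := Num.min 1 c in
        (if t then r1 else r2) * x + rew_only r1 r2 t (c - x) I'
      else rew_only r1 r2 t c I'
  end.

(* The randomized algorithm: w.p. 1/2 accept only type 1, w.p. 1/2 only type 2.
   Its expected reward (expectation over its internal randomness). *)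
Definition rew_alg (m : nat) (r1 r2 : R) (I : seq bool) : R :=
  2^-1 * rew_only r1 r2 true m%:R I + 2^-1 * rew_only r1 r2 false m%:R I.

Definition OPT (m : nat) (r1 r2 : R) (n1 n2 : nat) : R :=
  r1 * Num.min n1%:R m%:R
  + r2 * Num.min n2%:R (Num.max (m%:R - n1%:R) 0).

(* Ratio REW/OPT, with the convention 0/0 := 1 (OPT = 0 only when no
   agent arrives, in which case any algorithm is optimal). *)
Definition ratio (m : nat) (r1 r2 : R) (n1 n2 : nat) (I : seq bool) : R :=
  if OPT m r1 r2 n1 n2 == 0 then 1 else rew_alg m r1 r2 I / OPT m r1 r2 n1 n2.

Definition arrivals (n1 n2 : nat) : set (seq bool) :=
  [set I | count id I = n1 /\ count negb I = n2].

Definition worst_ratio (m : nat) (r1 r2 : R) (n1 n2 : nat) : R :=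
  inf [set ratio m r1 r2 n1 n2 I | I in arrivals n1 n2].

Definition binom_pmf (n : nat) (p : R) (k : nat) : R :=
  'C(n, k)%:R * p ^+ k * (1 - p) ^+ (n - k).

(* E_psi over s1 ~ Bin(h,p), s2 ~ Bin(l,p); n1 = h - s1, n2 = l - s2. *)
Definition expected_ratio (m : nat) (p r1 r2 : R) (h l : nat) : R :=
  \sum_(s1 < h.+1) \sum_(s2 < l.+1)
     binom_pmf h p s1 * binom_pmf l p s2 * worst_ratio m r1 r2 (h - s1) (l - s2).

Definition competitive_ratio (m : nat) (p r1 r2 : R) : R :=
  inf [set x | exists h l : nat, x = expected_ratio m p r1 r2 h l].

End Model.

(** The algorithm collects, from each type, half of the reward of the greedy
    policy restricted to that type, i.e. [r_i min(n_i, m)] / 2, whereas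
    [OPT <= r1 min(n1, m) + r2 min(n2, m)]; hence every arrival order gets at
    least half of [OPT], and so does the expectation over the samples.
    Conversely, an adversary presenting only [l] type-2 agents gets ratio
    exactly 1/2 unless all of them are sampled, which happens with
    probability [p ^ l]; letting [l] grow brings the competitive ratio down
    to 1/2. *)
From Pilot Require Import Defs.
From HB Require Import structures.
From mathcomp Require Import all_boot all_order all_algebra.
From mathcomp Require Import all_classical all_reals.
From mathcomp Require Import topology normedtype sequences.
Import numFieldNormedType.Exports.
Import Order.TTheory GRing.Theory Num.Theory.
Local Open Scope ring_scope.
Local Open Scope classical_set_scope.

Section Infimum.
Context {R : realType}.

Lemma inf_eq_min (S : set R) (v : R) :
  S v -> (forall x, S x -> v <= x) -> inf S = v.
Proof.
move=> Sv lbS; apply/le_anti/andP; split.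
  by apply: ge_inf Sv; exists v.
exact: lb_le_inf (ex_intro _ v Sv) lbS.
Qed.

Lemma inf_eq_lim_lbound (S : set R) (u : nat -> R) (v : R) :
  (forall x, S x -> v <= x) -> (forall n, S (u n)) -> u @ \oo --> v ->
  inf S = v.
Proof.
move=> lbS Su u_v; apply/le_anti/andP; split.
  apply: (cvgr_to_ge u_v); apply: nearW => n.
  by apply: ge_inf (Su n); exists v.
exact: lb_le_inf (ex_intro _ (u 0) (Su 0)) lbS.
Qed.

End Infimum.

Section Binomial.
Context {R : realType}.

Lemma binom_pmf_ge0 (n k : nat) (p : R) :
  0 <= p -> p <= 1 -> 0 <= binom_pmf n p k.
Proof. by move=> p0 p1; rewrite /binom_pmf !mulr_ge0 ?exprn_ge0 ?subr_ge0. Qed.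

Lemma binom_pmf_sum (n : nat) (p : R) : \sum_(k < n.+1) binom_pmf n p k = 1.
Proof.
have := exprDn (1 - p) p n; rewrite subrK expr1n => ->.
apply: eq_bigr => k _; rewrite /binom_pmf -mulrA mulr_natl.
by congr (_ *+ _); rewrite mulrC.
Qed.

Lemma binom_pmf_last (n : nat) (p : R) : binom_pmf n p n = p ^+ n.
Proof. by rewrite /binom_pmf binn subnn mul1r mulr1. Qed.

End Binomial.

Section Ratio.
Context {R : realType}.
Variables (m : nat) (r1 r2 : R).
Hypotheses (r1_ge0 : 0 <= r1) (r2_ge0 : 0 <= r2).

Lemma rew_only_natE (t : bool) (k : nat) (I : seq bool) :
  rew_only r1 r2 t k%:R I =
  (if t then r1 else r2) * (minn (count (pred1 t) I) k)%:R.
Proof.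
elim: I k => [|a I IH] k /=; first by rewrite min0n mulr0.
case: (a == t); rewrite ?IH //= add1n.
case: k => [|k]; first by rewrite min_r ?ler01 // subr0 IH !minn0 mulr0 addr0.
rewrite min_l ?ler1n // -natr1 addrK IH minnSS -addn1 natrD.
by rewrite mulrDr mulr1 addrC.
Qed.

Lemma rew_alg_arrivals (n1 n2 : nat) (I : seq bool) : arrivals n1 n2 I ->
  rew_alg m r1 r2 I = 2^-1 * (r1 * (minn n1 m)%:R + r2 * (minn n2 m)%:R).
Proof.
case=> cnt1 cnt2; rewrite /rew_alg !rew_only_natE /= mulrDr.
have -> : count (pred1 true) I = n1.
  by rewrite -cnt1; apply: eq_count => a; rewrite /= eqb_id.
have -> : count (pred1 false) I = n2.
  by rewrite -cnt2; apply: eq_count => a; rewrite /= eqbF_neg.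
by [].
Qed.

Lemma OPT_ge0 (n1 n2 : nat) : 0 <= OPT m r1 r2 n1 n2.
Proof.
by rewrite /OPT addr_ge0 // mulr_ge0 // le_min ?ler0n // le_max lexx orbT.
Qed.

Lemma OPT_le_sum_greedy (n1 n2 : nat) :
  OPT m r1 r2 n1 n2 <= r1 * (minn n1 m)%:R + r2 * (minn n2 m)%:R.
Proof.
rewrite /OPT !natr_min lerD2l ler_wpM2l // le_min ge_min lexx /=.
by rewrite ge_min ge_max ler0n andbT gerDl oppr_le0 ler0n orbT.
Qed.

Lemma ratio_ge_half (n1 n2 : nat) (I : seq bool) : arrivals n1 n2 I ->
  2^-1 <= Defs.ratio m r1 r2 n1 n2 I.
Proof.
move=> hI; rewrite /Defs.ratio; case: eqP => [_|OPT_neq0].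
  by rewrite invf_le1 // ler1n.
have OPT_gt0 : 0 < OPT m r1 r2 n1 n2 by rewrite lt_def OPT_ge0 andbT; apply/eqP.
rewrite ler_pdivlMr // (rew_alg_arrivals _ _ _ hI) mulrC [X in _ <= X]mulrC.
by apply: ler_wpM2r; rewrite ?invr_ge0 ?ler0n ?OPT_le_sum_greedy.
Qed.

Lemma arrivals_sorted (n1 n2 : nat) :
  arrivals n1 n2 (nseq n1 true ++ nseq n2 false).
Proof. by split; rewrite count_cat !count_nseq /= mul1n mul0n ?addn0. Qed.

Lemma worst_ratio_ge_half (n1 n2 : nat) : 2^-1 <= worst_ratio m r1 r2 n1 n2.
Proof.
apply: lb_le_inf; last by move=> _ [I hI <-]; apply: ratio_ge_half.
by exists (Defs.ratio m r1 r2 n1 n2 (nseq n1 true ++ nseq n2 false));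
  exists (nseq n1 true ++ nseq n2 false); first exact: arrivals_sorted.
Qed.

Lemma expected_ratio_ge_half (p : R) (h l : nat) : 0 <= p -> p <= 1 ->
  2^-1 <= expected_ratio m p r1 r2 h l.
Proof.
move=> p_ge0 p_le1.
have half_sum : (2^-1 : R) = \sum_(s1 < h.+1) \sum_(s2 < l.+1)
    binom_pmf h p s1 * binom_pmf l p s2 * 2^-1.
  rewrite -[LHS]mul1r -(binom_pmf_sum h p) mulr_suml; apply: eq_bigr => s1 _.
  rewrite -[LHS]mulr1 -(binom_pmf_sum l p) mulr_sumr; apply: eq_bigr => s2 _.
  by rewrite mulrAC.
rewrite /expected_ratio {1}half_sum.
apply: ler_sum => s1 _; apply: ler_sum => s2 _.
apply: ler_wpM2l; last exact: worst_ratio_ge_half.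
by rewrite mulr_ge0 ?binom_pmf_ge0.
Qed.

Hypotheses (m_gt0 : (0 < m)%N) (r2_gt0 : 0 < r2).

Lemma ratio_type2_only (n2 : nat) (I : seq bool) : arrivals 0 n2 I ->
  Defs.ratio m r1 r2 0 n2 I = 2^-1 + 2^-1 * (n2 == 0)%:R.
Proof.
move=> hI; have OPT_type2 : OPT m r1 r2 0 n2 = r2 * (minn n2 m)%:R.
  by rewrite /OPT min_l ?mulr0 ?add0r ?subr0 ?max_l ?natr_min.
rewrite /Defs.ratio OPT_type2 (rew_alg_arrivals _ _ _ hI) min0n mulr0 add0r.
case: n2 {hI OPT_type2} => [|n2] /=.
  by rewrite min0n mulr0 eqxx mulr1 -div1r -splitr.
have OPT_gt0 : 0 < r2 * (minn n2.+1 m)%:R by rewrite mulr_gt0 // ltr0n leq_min.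
by rewrite gt_eqF // mulfK ?gt_eqF // mulr0 addr0.
Qed.

Lemma worst_ratio_type2_only (n2 : nat) :
  worst_ratio m r1 r2 0 n2 = 2^-1 + 2^-1 * (n2 == 0)%:R.
Proof.
apply: inf_eq_min; last by move=> _ [I hI <-]; rewrite ratio_type2_only.
exists (nseq n2 false); first exact: (arrivals_sorted 0 n2).
by rewrite ratio_type2_only //; exact: (arrivals_sorted 0 n2).
Qed.

Lemma expected_ratio_type2_only (p : R) (l : nat) :
  expected_ratio m p r1 r2 0 l = 2^-1 + 2^-1 * p ^+ l.
Proof.
rewrite /expected_ratio big_ord1 binom_pmf_last expr0 sub0n.
under eq_bigr do rewrite mul1r worst_ratio_type2_only mulrDr.
rewrite big_split /= -mulr_suml binom_pmf_sum mul1r; congr (_ + _).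
rewrite big_ord_recr /= subnn binom_pmf_last mulr1 big1 ?add0r 1?mulrC //.
by move=> s _; rewrite subn_eq0 leqNgt ltn_ord !mulr0.
Qed.

End Ratio.

Theorem theorem5 (R : realType) (m : nat) (p r1 r2 C : R) :
  (0 < m)%N ->
  0 <= p -> p < 1 ->
  p <= C / Num.sqrt (m%:R) ->
  0 < r2 -> r2 < r1 -> r1 < 1 ->
  competitive_ratio m p r1 r2 = 2^-1.
Proof.
move=> m_gt0 p_ge0 p_lt1 _ r2_gt0 r21 _.
have r2_ge0 := ltW r2_gt0; have r1_ge0 := ltW (lt_trans r2_gt0 r21).
apply: (@inf_eq_lim_lbound _ _ (fun l => 2^-1 + 2^-1 * p ^+ l)).
- by move=> _ [h [l ->]]; apply: expected_ratio_ge_half => //; exact: ltW.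
- by move=> l; exists 0%N, l; rewrite expected_ratio_type2_only.
- rewrite -[X in _ --> X]addr0 -[X in _ + X](mulr0 2^-1).
  apply: cvgD; first exact: cvg_cst.
  by apply: cvgM; [exact: cvg_cst | apply: cvg_expr; rewrite ger0_norm].
Qed.
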